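(* Let $\chi_1,\chi_2,\dots$ be an enumeration of all sentences that have a separating model, and let $\mu$ be a probability on sentences. Say $\mu$ has a rigid mixture representation if $\mu(\varphi)=\sum_{i=1}^\infty m_i\mu_i(\varphi)$ for all sentences $\varphi$, for some reals $m_i>0$ with $\sum_i m_i=1$ and some probabilities on sentences $\mu_i$ with $\mu_i(\chi_i)=1$ for each $i$. Then: (a) $\mu$ is Cournot if and only if $\mu$ has a rigid mixture representation; (b) $\mu$ is Cournot and Gaifman if and only if $\mu$ has a rigid mixture representation in which all $\mu_i$ are Gaifman.
   Context: Setting: higher-order logic (Church's simple theory of types, without a description operator). Types are generated from $o$ and $\imath$ by $\alpha\to\beta$; terms are built from variables and constants (including equality $=_{\alpha\to\alpha\to o}$) by $\lambda$-abstraction and application; sentences are closed terms of type $o$, $\mathcal S$ the set of sentences. Henkin semantics: an interpretation $I$ consists of domains $D_\alpha$ ($D_o=\{\mathsf T,\mathsf F\}$, $D_{\alpha\to\beta}$ a set of functions) and a valuation of constants such that every term has a denotation; $V(t,I)$ is the denotation of closed $t$. A sentence is valid if true in every interpretation. $I$ is separating if for all closed terms $r,s$ of the same function type $\alpha\to\beta$ with $V(r,I)\neq V(s,I)$ there is a closed term $t$ of type $\alpha$ (over the given alphabet) with $V((r\,t),I)\neq V((s\,t),I)$; a separating model of a sentence is a separating interpretation in which it is true. A probability on sentences is a non-negative $\mu:\mathcal S\to\mathbb R$ with $\mu(\varphi)=1$ for valid $\varphi$ and $\mu(\varphi\vee\psi)=\mu(\varphi)+\mu(\psi)$ whenever $\neg(\varphi\wedge\psi)$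 is valid. $\mu$ is Gaifman if for all closed terms $r,s$ of the same function type $\alpha\to\beta$, $\mu(r=s)=\inf_{\{t_1,\dots,t_n\}}\mu(\bigwedge_{i=1}^n((r\,t_i)=(s\,t_i)))$ over all finite sets of closed terms of type $\alpha$. $\mu$ is Cournot if $\mu(\varphi)>0$ for every sentence with a separating model. *)

(* Higher-order logic (Church's simple type theory, Q0-style:
   the only logical constants are the equalities =_alpha), Henkin semantics,
   probabilities on sentences, Gaifman and Cournot conditions. *)
From Stdlib Require Import Reals List.
Open Scope R_scope.

Inductive ty : Type := To | Ti | Arr (a b : ty).

Record Sig : Type := { const : Type; ctyp : const -> ty }.

Inductive var : list ty -> ty -> Type :=
| VZ : forall G a, var (a :: G) a
| VS : forall G a b, var G a -> var (b :: G) a.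
Arguments VZ {G a}.
Arguments VS {G a b} v.

Inductive tm (S : Sig) (G : list ty) : ty -> Type :=
| tVar : forall a, var G a -> tm S G a
| tCon : forall c : const S, tm S G (ctyp S c)
| tEq  : forall a, tm S G (Arr a (Arr a To))
| tLam : forall a b, tm S (a :: G) b -> tm S G (Arr a b)
| tApp : forall a b, tm S G (Arr a b) -> tm S G a -> tm S G b.
Arguments tVar {S G a} v.
Arguments tCon {S G} c.
Arguments tEq {S G} a.
Arguments tLam {S G a b} t.
Arguments tApp {S G a b} t u.

Definition sentence (S : Sig) : Type := tm S nil To.

Fixpoint env (D : ty -> Type) (G : list ty) : Type :=
  match G with nil => unit | a :: G' => (D a * env D G')%type end.

Fixpoint lookup (D : ty -> Type) (G : list ty) (a : ty) (v : var G a)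
  : env D G -> D a :=
  match v in var G a return env D G -> D a with
  | @VZ G a => fun e => fst e
  | @VS G a b v' => fun e => lookup D G a v' (snd e)
  end.

(** D a is the domain of type a;
    D (Arr a b) is (via the injective application map [app]) a set of
    functions D a -> D b; D To is the two-element set of truth values
    (identified with bool by the bijection [tval]); every term has a
    denotation [den], satisfying the usual compositional clauses. *)
Record interp (S : Sig) : Type := {
  dom : ty -> Type;
  dom_ne : forall a, inhabited (dom a);
  app : forall a b, dom (Arr a b) -> dom a -> dom b;
  app_ext : forall a b (f g : dom (Arr a b)),
      (forall x, app a b f x = app a b g x) -> f = g;
  tval : dom To -> bool;
  tval_inj : forall x y, tval x = tval y -> x = y;
  tval_surj : forall bv, exists x, tval x = bv;
  cval : forall c : const S, dom (ctyp S c);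
  den : forall G a, tm S G a -> env dom G -> dom a;
  den_var : forall G a (v : var G a) e, den G a (tVar v) e = lookup dom G a v e;
  den_con : forall G c e, den G (ctyp S c) (tCon c) e = cval c;
  den_eq : forall G a e x y,
      tval (app a To (app a (Arr a To) (den G _ (tEq a) e) x) y) = true <-> x = y;
  den_lam : forall G a b (t : tm S (a :: G) b) e x,
      app a b (den G _ (tLam t) e) x = den (a :: G) b t (x, e);
  den_app : forall G a b (t : tm S G (Arr a b)) (u : tm S G a) e,
      den G b (tApp t u) e = app a b (den G _ t e) (den G a u e)
}.
Arguments dom {S} i a.
Arguments app {S} i {a b} f x.
Arguments tval {S} i x.
Arguments den {S} i {G a} t e.

Definition V {S : Sig} {a : ty} (t : tm S nil a) (I : interp S) : dom I a :=
  den I t tt.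

Definition true_in {S : Sig} (I : interp S) (phi : sentence S) : Prop :=
  tval I (V phi I) = true.

Definition valid {S : Sig} (phi : sentence S) : Prop :=
  forall I : interp S, true_in I phi.

(** Logical connectives, defined from equality as in Andrews' Q0. *)
Definition teq {S G a} (r s : tm S G a) : tm S G To := tApp (tApp (tEq a) r) s.

Definition tTrue {S G} : tm S G To := teq (tEq To) (tEq To).
Definition tFalse {S G} : tm S G To :=
  teq (tLam (a := To) tTrue) (tLam (a := To) (tVar VZ)).
Definition tNeg {S G} (p : tm S G To) : tm S G To := teq tFalse p.
(* AND := \x y. (\g. g T T) = (\g. g x y) *)
Definition tAND {S G} : tm S G (Arr To (Arr To To)) :=
  tLam (a := To) (tLam (a := To)
    (teq (tLam (a := Arr To (Arr To To)) (tApp (tApp (tVar VZ) tTrue) tTrue))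
         (tLam (a := Arr To (Arr To To))
            (tApp (tApp (tVar VZ) (tVar (VS (VS VZ)))) (tVar (VS VZ)))))).
Definition tAnd {S G} (p q : tm S G To) : tm S G To := tApp (tApp tAND p) q.
Definition tOr {S G} (p q : tm S G To) : tm S G To :=
  tNeg (tAnd (tNeg p) (tNeg q)).

Fixpoint bigAnd {S} (l : list (sentence S)) : sentence S :=
  match l with
  | nil => tTrue
  | p :: nil => p
  | p :: l' => tAnd p (bigAnd l')
  end.

Definition separating {S : Sig} (I : interp S) : Prop :=
  forall a b (r s : tm S nil (Arr a b)),
    V r I <> V s I -> exists t : tm S nil a, V (tApp r t) I <> V (tApp s t) I.

Definition has_sep_model {S : Sig} (phi : sentence S) : Prop :=
  exists I : interp S, separating I /\ true_in I phi.

Definition is_prob {S : Sig} (mu : sentence S -> R) : Prop :=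
  (forall phi, 0 <= mu phi) /\
  (forall phi, valid phi -> mu phi = 1) /\
  (forall phi psi, valid (tNeg (tAnd phi psi)) -> mu (tOr phi psi) = mu phi + mu psi).

Definition is_inf (A : R -> Prop) (x : R) : Prop :=
  (forall y, A y -> x <= y) /\ (forall z, (forall y, A y -> z <= y) -> z <= x).

Definition gaifman {S : Sig} (mu : sentence S -> R) : Prop :=
  forall a b (r s : tm S nil (Arr a b)),
    is_inf (fun x => exists l : list (tm S nil a),
                x = mu (bigAnd (map (fun t => teq (tApp r t) (tApp s t)) l)))
           (mu (teq r s)).

Definition cournot {S : Sig} (mu : sentence S -> R) : Prop :=
  forall phi, has_sep_model phi -> 0 < mu phi.

Definition rigid_mixture {S : Sig} (chi : nat -> sentence S)
    (P : (sentence S -> R) -> Prop) (mu : sentence S -> R) : Prop :=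
  exists (m : nat -> R) (mus : nat -> sentence S -> R),
    (forall i, 0 < m i) /\ infinite_sum m 1 /\
    (forall i, is_prob (mus i)) /\ (forall i, P (mus i)) /\
    (forall i, mus i (chi i) = 1) /\
    (forall phi, infinite_sum (fun i => m i * mus i phi) (mu phi)).

(* A Cournot probability gives positive mass to every [chi k], so the pieces
   [2^-(k+1) mu(_ /\ chi k)] are nonzero measures concentrated on [chi k].
   Their sum is a measure below [mu], the remainder is again a measure, and
   [True] (which has a separating model) occurs as some [chi j]; normalizing the
   pieces yields the components and their masses the weights.  Every component
   is bounded by a multiple of [mu], and Gaifman's condition passes to measures
   dominated by a Gaifman one.  Conversely the term [m i * mu_i (chi i) = m i]
   bounds [mu (chi i)] from below, and a mixture of Gaifman probabilities is
   Gaifman. *)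

From Stdlib Require Import Reals List Lra Lia Bool Classical.
Open Scope R_scope.

Lemma Un_cv_le_eventually (u : nat -> R) l c N :
  Un_cv u l -> (forall n, (n >= N)%nat -> u n <= c) -> l <= c.
Proof.
  intros Hu Hc. apply Rnot_lt_le. intros Hlt.
  destruct (Hu (l - c)) as [M HM]; [lra|].
  specialize (HM (max N M) ltac:(lia)). specialize (Hc (max N M) ltac:(lia)).
  unfold Rdist in HM. apply Rabs_def2 in HM. lra.
Qed.

Lemma series_ext (a b : nat -> R) l :
  (forall n, a n = b n) -> infinite_sum a l -> infinite_sum b l.
Proof. intros E. apply Un_cv_ext. intros n. apply sum_eq. auto. Qed.

Lemma series_plus (a b : nat -> R) la lb :
  infinite_sum a la -> infinite_sum b lb -> infinite_sum (fun n => a n + b n) (la + lb).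
Proof.
  intros Ha Hb. apply (Un_cv_ext (fun n => sum_f_R0 a n + sum_f_R0 b n)).
  - intros n. symmetry. apply sum_plus.
  - apply CV_plus; assumption.
Qed.

Lemma series_minus (a b : nat -> R) la lb :
  infinite_sum a la -> infinite_sum b lb -> infinite_sum (fun n => a n - b n) (la - lb).
Proof.
  intros Ha Hb. apply (Un_cv_ext (fun n => sum_f_R0 a n - sum_f_R0 b n)).
  - intros n. symmetry. apply minus_sum.
  - apply CV_minus; assumption.
Qed.

Lemma series_single j x : infinite_sum (fun i => if Nat.eq_dec i j then x else 0) x.
Proof.
  intros eps Heps. exists j. intros n Hn.
  replace (sum_f_R0 _ n) with x.
  { unfold Rdist. rewrite Rminus_diag, Rabs_R0. lra. }
  induction Hn as [|n Hn IH].
  - destruct j as [|j].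
    + simpl. destruct (Nat.eq_dec 0 0); congruence.
    + rewrite tech5, sum_eq_R0.
      * destruct (Nat.eq_dec (S j) (S j)); [ring|congruence].
      * intros i Hi. destruct (Nat.eq_dec i (S j)); [lia|reflexivity].
  - rewrite tech5, <- IH. destruct (Nat.eq_dec (S n) j); [lia|ring].
Qed.

Section NonnegSeries.
Variable a : nat -> R.
Hypothesis a_nonneg : forall k, 0 <= a k.

Lemma partial_sums_growing : Un_growing (sum_f_R0 a).
Proof. intros n. simpl. specialize (a_nonneg (S n)). lra. Qed.

Lemma partial_sum_le_series l n : infinite_sum a l -> sum_f_R0 a n <= l.
Proof. intros Hl. exact (growing_ineq _ _ partial_sums_growing Hl n). Qed.

Lemma term_le_series l n : infinite_sum a l -> a n <= l.
Proof.
  intros Hl. apply Rle_trans with (sum_f_R0 a n); [|exact (partial_sum_le_series l n Hl)].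
  destruct n as [|n]; simpl; [lra|].
  pose proof (cond_pos_sum a n a_nonneg). lra.
Qed.

Lemma series_nonneg l : infinite_sum a l -> 0 <= l.
Proof.
  intros Hl. apply Rle_trans with (a 0%nat); [apply a_nonneg | exact (term_le_series l 0 Hl)].
Qed.

Lemma bounded_series_cv B : (forall n, sum_f_R0 a n <= B) -> {l | infinite_sum a l}.
Proof.
  intros HB. apply growing_cv; [exact partial_sums_growing|].
  exists B. intros x [n ->]. apply HB.
Qed.
End NonnegSeries.

Lemma half_pow_partial_sum_le1 n : sum_f_R0 (fun k => (1/2) ^ S k) n <= 1.
Proof.
  assert (E : sum_f_R0 (fun k => (1/2) ^ S k) n = 1 - (1/2) ^ S n).
  { induction n as [|n IH]; simpl in *; [field|]. rewrite IH. field. }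
  rewrite E. pose proof (pow_lt (1/2) (S n) ltac:(lra)). lra.
Qed.

Section Semantics.
Variables (Sg : Sig) (I : interp Sg).

Lemma den_teq G a (r s : tm Sg G a) e :
  tval I (den I (teq r s) e) = true <-> den I r e = den I s e.
Proof. unfold teq. rewrite !den_app. apply den_eq. Qed.

Lemma den_true G e : tval I (den I (@tTrue Sg G) e) = true.
Proof. apply den_teq. reflexivity. Qed.

Lemma eq_den_true G e x : tval I x = true -> x = den I (@tTrue Sg G) e.
Proof. intros H. apply tval_inj. rewrite H. symmetry. apply den_true. Qed.

Lemma den_false G e : tval I (den I (@tFalse Sg G) e) = false.
Proof.
  apply not_true_is_false. intros H. apply den_teq in H.
  destruct (tval_surj _ I false) as [x Hx].
  assert (Hxe := f_equal (fun f => app I f x) H). cbv beta in Hxe.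
  rewrite !den_lam, den_var in Hxe. cbn [lookup fst] in Hxe.
  rewrite <- Hxe, den_true in Hx. discriminate.
Qed.

Lemma den_neg G (p : tm Sg G To) e :
  tval I (den I (tNeg p) e) = negb (tval I (den I p e)).
Proof.
  unfold tNeg. destruct (tval I (den I p e)) eqn:Hp; simpl.
  - apply not_true_is_false. intros H. apply den_teq in H.
    rewrite <- H, den_false in Hp. discriminate.
  - apply den_teq, tval_inj. rewrite Hp, den_false. reflexivity.
Qed.

Lemma den_fst G a (x y : dom I a) (e : env (dom I) G) :
  app I (app I (den I (tLam (a := a) (tLam (a := a) (tVar (VS VZ)))) e) x) y = x.
Proof. rewrite !den_lam, den_var. reflexivity. Qed.

Lemma den_snd G a (x y : dom I a) (e : env (dom I) G) :
  app I (app I (den I (tLam (a := a) (tLam (a := a) (tVar VZ))) e) x) y = y.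
Proof. rewrite !den_lam, den_var. reflexivity. Qed.

(* [tAND x y] compares [fun g => g T T] with [fun g => g x y]; feeding both the
   two projections recovers [x = T] and [y = T]. *)
Lemma den_and G (p q : tm Sg G To) e :
  tval I (den I (tAnd p q) e) = tval I (den I p e) && tval I (den I q e).
Proof.
  unfold tAnd, tAND. rewrite !den_app, !den_lam.
  set (P := den I p e). set (Q := den I q e).
  apply eq_true_iff_eq. rewrite den_teq, andb_true_iff. split.
  - intros H.
    pose (E := (Q, (P, e)) : env (dom I) (To :: To :: G)).
    pose (pr1 := den I (tLam (a := To) (tLam (a := To) (tVar (VS VZ)))) E).
    pose (pr2 := den I (tLam (a := To) (tLam (a := To) (tVar VZ))) E).
    assert (H1 := f_equal (fun f => app I f pr1) H).
    assert (H2 := f_equal (fun f => app I f pr2) H).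
    cbv beta in H1, H2. rewrite !den_lam, !den_app, !den_var in H1, H2.
    cbn [lookup fst snd] in H1, H2. unfold pr1 in H1. unfold pr2 in H2.
    rewrite !den_fst in H1. rewrite !den_snd in H2.
    split; [rewrite <- H1 | rewrite <- H2]; apply den_true.
  - intros [HP HQ]. apply app_ext. intros g.
    rewrite !den_lam, !den_app, !den_var. cbn [lookup fst snd].
    f_equal; [f_equal|]; symmetry; apply eq_den_true; assumption.
Qed.
End Semantics.

Definition truth {Sg} (I : interp Sg) (phi : sentence Sg) : bool := tval I (V phi I).

Section Truth.
Variables (Sg : Sig) (I : interp Sg).

Lemma truth_true : truth I tTrue = true.
Proof. apply den_true. Qed.

Lemma truth_teq a (r s : tm Sg nil a) : truth I (teq r s) = true <-> V r I = V s I.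
Proof. apply den_teq. Qed.

Lemma truth_neg p : truth I (tNeg p) = negb (truth I p).
Proof. apply den_neg. Qed.

Lemma truth_and p q : truth I (tAnd p q) = truth I p && truth I q.
Proof. apply den_and. Qed.

Lemma truth_or p q : truth I (tOr p q) = truth I p || truth I q.
Proof.
  unfold tOr. rewrite truth_neg, truth_and, !truth_neg.
  destruct (truth I p), (truth I q); reflexivity.
Qed.

Lemma truth_bigAnd l : truth I (bigAnd l) = forallb (truth I) l.
Proof.
  induction l as [|p [|q l] IH]; [apply truth_true| |].
  - simpl. rewrite andb_true_r. reflexivity.
  - change (bigAnd (p :: q :: l)) with (tAnd p (bigAnd (q :: l))).
    rewrite truth_and, IH. reflexivity.
Qed.
End Truth.

Definition sem_equiv {Sg} (p q : sentence Sg) : Prop := forall I, truth I p = truth I q.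
Definition entails {Sg} (p q : sentence Sg) : Prop :=
  forall I, truth I p = true -> truth I q = true.
Definition incompatible {Sg} (p q : sentence Sg) : Prop :=
  forall I, truth I p && truth I q = false.

Lemma valid_iff_truth {Sg} (p : sentence Sg) : valid p <-> forall I, truth I p = true.
Proof. reflexivity. Qed.

Lemma incompatible_iff_valid {Sg} (p q : sentence Sg) :
  incompatible p q <-> valid (tNeg (tAnd p q)).
Proof.
  rewrite valid_iff_truth. unfold incompatible.
  split; intros H I; specialize (H I); rewrite truth_neg, truth_and in *;
    destruct (truth I p), (truth I q); simpl in *; congruence.
Qed.

Record is_measure {Sg} (nu : sentence Sg -> R) : Prop := {
  measure_nonneg : forall p, 0 <= nu p;
  measure_equiv : forall p q, sem_equiv p q -> nu p = nu q;
  measure_additive : forall p q, incompatible p q -> nu (tOr p q) = nu p + nu q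
}.

Section Measure.
Context {Sg : Sig}.
Implicit Types (p q : sentence Sg) (nu : sentence Sg -> R).

Lemma measure_split nu p q : is_measure nu -> entails q p ->
  nu p = nu q + nu (tAnd p (tNeg q)).
Proof.
  intros Hnu Hqp. rewrite <- (measure_additive _ Hnu).
  - apply (measure_equiv _ Hnu). intros I. specialize (Hqp I).
    rewrite truth_or, truth_and, truth_neg.
    destruct (truth I p), (truth I q); simpl; auto.
  - intros I. rewrite truth_and, truth_neg. destruct (truth I p), (truth I q); reflexivity.
Qed.

Lemma measure_mono nu p q : is_measure nu -> entails q p -> nu q <= nu p.
Proof.
  intros Hnu Hqp. rewrite (measure_split nu p q Hnu Hqp).
  pose proof (measure_nonneg _ Hnu (tAnd p (tNeg q))). lra.
Qed.

Lemma measure_plus nu1 nu2 : is_measure nu1 -> is_measure nu2 ->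
  is_measure (fun p => nu1 p + nu2 p).
Proof.
  intros [N1 E1 A1] [N2 E2 A2]. split.
  - intros p. specialize (N1 p). specialize (N2 p). lra.
  - intros p q H. rewrite (E1 p q H), (E2 p q H). reflexivity.
  - intros p q H. rewrite (A1 p q H), (A2 p q H). ring.
Qed.

Lemma measure_zero : is_measure (fun _ : sentence Sg => 0).
Proof. split; intros; lra. Qed.

Lemma measure_minus nu1 nu2 : is_measure nu1 -> is_measure nu2 ->
  (forall p, nu2 p <= nu1 p) -> is_measure (fun p => nu1 p - nu2 p).
Proof.
  intros [N1 E1 A1] [N2 E2 A2] H12. split.
  - intros p. specialize (H12 p). lra.
  - intros p q H. rewrite (E1 p q H), (E2 p q H). reflexivity.
  - intros p q H. rewrite (A1 p q H), (A2 p q H). ring.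
Qed.

Lemma measure_restrict nu c q : is_measure nu -> 0 <= c ->
  is_measure (fun p => c * nu (tAnd p q)).
Proof.
  intros [N E A] Hc. split.
  - intros p. apply Rmult_le_pos; auto.
  - intros p p' H. f_equal. apply E. intros I. rewrite !truth_and, H. reflexivity.
  - intros p p' H. rewrite <- Rmult_plus_distr_l. f_equal. rewrite <- A.
    + apply E. intros I. rewrite truth_or, !truth_and, truth_or.
      destruct (truth I p), (truth I p'), (truth I q); reflexivity.
    + intros I. specialize (H I). rewrite !truth_and.
      destruct (truth I p), (truth I p'), (truth I q); simpl in *; auto.
Qed.

Lemma measure_series (nus : nat -> sentence Sg -> R) nu :
  (forall k, is_measure (nus k)) -> (forall p, infinite_sum (fun k => nus k p) (nu p)) ->
  is_measure nu.
Proof.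
  intros Hk Hsum. split.
  - intros p. apply (series_nonneg (fun k => nus k p)); [|apply Hsum].
    intros k. apply (measure_nonneg _ (Hk k)).
  - intros p q H. apply (uniqueness_sum (fun k => nus k p)); [apply Hsum|].
    apply (series_ext (fun k => nus k q)); [|apply Hsum].
    intros k. symmetry. apply (measure_equiv _ (Hk k)), H.
  - intros p q H. apply (uniqueness_sum (fun k => nus k (tOr p q))); [apply Hsum|].
    apply (series_ext (fun k => nus k p + nus k q)); [|apply series_plus; apply Hsum].
    intros k. symmetry. apply (measure_additive _ (Hk k)), H.
Qed.

Lemma prob_true nu : is_prob nu -> nu tTrue = 1.
Proof. intros (_ & H1 & _). apply H1, valid_iff_truth. intros I. apply truth_true. Qed.

Lemma prob_measure nu : is_prob nu -> is_measure nu.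
Proof.
  intros (H0 & H1 & H2).
  assert (Hcompl : forall p, nu p + nu (tNeg p) = 1).
  { intros p. rewrite <- H2; [apply H1, valid_iff_truth|].
    - intros I. rewrite truth_or, truth_neg. destruct (truth I p); reflexivity.
    - apply incompatible_iff_valid. intros I.
      rewrite truth_neg. destruct (truth I p); reflexivity. }
  split; auto.
  - intros p q H. pose proof (Hcompl p) as Hp. pose proof (Hcompl q) as Hq.
    assert (Hnq : nu (tOr p (tNeg q)) = 1).
    { apply H1, valid_iff_truth. intros I.
      rewrite truth_or, truth_neg, H. destruct (truth I q); reflexivity. }
    rewrite H2 in Hnq; [lra|].
    apply incompatible_iff_valid. intros I. rewrite truth_neg, H.
    destruct (truth I q); reflexivity.
  - intros p q H. apply H2, incompatible_iff_valid, H.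
Qed.

Lemma prob_le1 nu p : is_prob nu -> nu p <= 1.
Proof.
  intros Hnu. rewrite <- (prob_true nu Hnu).
  apply measure_mono; [apply prob_measure, Hnu|]. intros I _. apply truth_true.
Qed.

Lemma normalized_prob nu : is_measure nu -> 0 < nu tTrue ->
  is_prob (fun p => nu p / nu tTrue).
Proof.
  intros [N E A] Hpos. split; [|split].
  - intros p. apply Rmult_le_pos; [auto|left; apply Rinv_0_lt_compat, Hpos].
  - intros p Hp. rewrite (E p tTrue); [field; lra|].
    intros I. rewrite truth_true. apply Hp.
  - intros p q Hpq. apply incompatible_iff_valid in Hpq. rewrite A by exact Hpq. field. lra.
Qed.
End Measure.

Lemma series_le_split (d m : nat -> R) D M c N :
  infinite_sum d D -> infinite_sum m M -> (forall k, d k <= m k) ->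
  (forall k, (k <= N)%nat -> d k <= c * m k) ->
  D <= c * sum_f_R0 m N + (M - sum_f_R0 m N).
Proof.
  intros Hd Hm Hdm HdmN.
  assert (Hhead : sum_f_R0 (fun k => d k - m k) N <= (c - 1) * sum_f_R0 m N).
  { rewrite scal_sum. apply sum_Rle. intros k Hk.
    specialize (HdmN k Hk). lra. }
  assert (Htail : forall n, (n >= N)%nat ->
            sum_f_R0 (fun k => d k - m k) n <= sum_f_R0 (fun k => d k - m k) N).
  { intros n Hn. induction Hn as [|n Hn IH]; [lra|].
    simpl. specialize (Hdm (S n)). lra. }
  enough (D - M <= (c - 1) * sum_f_R0 m N) by lra.
  apply (Un_cv_le_eventually _ _ _ N (series_minus d m D M Hd Hm)).
  intros n Hn. specialize (Htail n Hn). lra.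
Qed.

Definition pointwise_eqs {Sg a b} (r s : tm Sg nil (Arr a b)) (l : list (tm Sg nil a))
  : sentence Sg :=
  bigAnd (map (fun t => teq (tApp r t) (tApp s t)) l).

Section PointwiseEqs.
Context {Sg : Sig} {a b : ty}.
Variables r s : tm Sg nil (Arr a b).

Lemma truth_pointwise_eqs I l :
  truth I (pointwise_eqs r s l) = true <->
  forall t, In t l -> V (tApp r t) I = V (tApp s t) I.
Proof.
  unfold pointwise_eqs. rewrite truth_bigAnd, forallb_forall. split.
  - intros H t Ht. apply truth_teq, H. apply (in_map (fun t => teq (tApp r t) (tApp s t))), Ht.
  - intros H x Hx. apply in_map_iff in Hx. destruct Hx as [t [<- Ht]].
    apply truth_teq, H, Ht.
Qed.

Lemma entails_pointwise_eqs l : entails (teq r s) (pointwise_eqs r s l).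
Proof.
  intros I H. apply truth_pointwise_eqs. intros t _.
  apply truth_teq in H. unfold V in *. rewrite !den_app, H. reflexivity.
Qed.

Lemma pointwise_eqs_incl l l' :
  incl l' l -> entails (pointwise_eqs r s l) (pointwise_eqs r s l').
Proof.
  intros Hincl I H. rewrite truth_pointwise_eqs in *. intros t Ht. apply H, Hincl, Ht.
Qed.
End PointwiseEqs.

Section Gaifman.
Context {Sg : Sig}.
Implicit Types (nu : sentence Sg -> R).

Lemma gaifman_iff_approx nu : is_measure nu ->
  gaifman nu <-> forall a b (r s : tm Sg nil (Arr a b)) eps, 0 < eps ->
    exists l, nu (pointwise_eqs r s l) < nu (teq r s) + eps.
Proof.
  intros Hnu. split.
  - intros G a b r s eps Heps. apply not_all_not_ex. intros Hno.
    enough (nu (teq r s) + eps <= nu (teq r s)) by lra.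
    apply (proj2 (G a b r s)). intros y [l ->]. apply Rnot_lt_le, Hno.
  - intros Happrox a b r s. split.
    + intros y [l ->]. apply (measure_mono _ _ _ Hnu), entails_pointwise_eqs.
    + intros z Hz. apply Rnot_lt_le. intros Hlt.
      destruct (Happrox a b r s (z - nu (teq r s))) as [l Hl]; [lra|].
      specialize (Hz _ (ex_intro _ l eq_refl)). unfold pointwise_eqs in Hl. lra.
Qed.

Lemma gaifman_dominated mu nu K : is_measure mu -> is_measure nu -> gaifman mu -> 0 < K ->
  (forall p, nu p <= K * mu p) -> gaifman nu.
Proof.
  intros Hmu Hnu Gmu HK Hdom. apply (gaifman_iff_approx nu Hnu). intros a b r s eps Heps.
  destruct (proj1 (gaifman_iff_approx mu Hmu) Gmu a b r s (eps / K)) as [l Hl].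
  { apply Rdiv_lt_0_compat; assumption. }
  exists l.
  pose proof (entails_pointwise_eqs r s l) as Hent.
  rewrite (measure_split nu _ _ Hnu Hent). rewrite (measure_split mu _ _ Hmu Hent) in Hl.
  set (gap := tAnd (pointwise_eqs r s l) (tNeg (teq r s))) in *.
  assert (K * mu gap < eps).
  { replace eps with (K * (eps / K)) by (field; lra). apply Rmult_lt_compat_l; lra. }
  specialize (Hdom gap). lra.
Qed.

Lemma gaifman_common_list (nus : nat -> sentence Sg -> R) a b (r s : tm Sg nil (Arr a b))
    eps N :
  (forall k, is_measure (nus k)) -> (forall k, gaifman (nus k)) -> 0 < eps ->
  exists l, forall k, (k <= N)%nat -> nus k (pointwise_eqs r s l) < nus k (teq r s) + eps.
Proof.
  intros Hm Hg Heps.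
  assert (Happrox : forall k, exists l, nus k (pointwise_eqs r s l) < nus k (teq r s) + eps).
  { intros k. exact (proj1 (gaifman_iff_approx _ (Hm k)) (Hg k) a b r s eps Heps). }
  induction N as [|N [l1 H1]].
  - destruct (Happrox 0%nat) as [l Hl]. exists l. intros k Hk.
    replace k with 0%nat by lia. exact Hl.
  - destruct (Happrox (S N)) as [l2 H2]. exists (l1 ++ l2). intros k Hk.
    assert (Hincl : incl (if Nat.eq_dec k (S N) then l2 else l1) (l1 ++ l2)).
    { destruct (Nat.eq_dec k (S N)); [apply incl_appr | apply incl_appl]; apply incl_refl. }
    apply Rle_lt_trans with
      (nus k (pointwise_eqs r s (if Nat.eq_dec k (S N) then l2 else l1))).
    + apply (measure_mono _ _ _ (Hm k)), (pointwise_eqs_incl r s _ _ Hincl).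
    + destruct (Nat.eq_dec k (S N)) as [->|]; [exact H2 | apply H1; lia].
Qed.
End Gaifman.

Section Mixture.
Context {Sg : Sig}.
Variables (m : nat -> R) (nus : nat -> sentence Sg -> R) (mu : sentence Sg -> R).
Hypothesis m_nonneg : forall k, 0 <= m k.
Hypothesis nus_prob : forall k, is_prob (nus k).
Hypothesis mu_mixture : forall p, infinite_sum (fun k => m k * nus k p) (mu p).

Lemma mixture_ge_component k p : m k * nus k p <= mu p.
Proof.
  apply (term_le_series (fun k => m k * nus k p)); [|apply mu_mixture].
  intros i. apply Rmult_le_pos; [apply m_nonneg | apply (proj1 (nus_prob i))].
Qed.

(* Split the series for [mu (pointwise_eqs r s l) - mu (teq r s)] into a head,
   where one list [l] serves all components, and a tail of small total weight. *)
Lemma mixture_gaifman : infinite_sum m 1 -> is_measure mu ->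
  (forall k, gaifman (nus k)) -> gaifman mu.
Proof.
  intros Hm1 Hmu Hg. apply (gaifman_iff_approx mu Hmu). intros a b r s eps Heps.
  destruct (Hm1 (eps / 2)) as [N HN]; [lra|].
  specialize (HN N (le_n N)). unfold Rdist in HN. apply Rabs_def2 in HN.
  destruct (gaifman_common_list nus a b r s (eps / 2) N
              (fun k => prob_measure _ (nus_prob k)) Hg ltac:(lra)) as [l Hl].
  exists l. set (P := pointwise_eqs r s l) in *. set (E := teq r s) in *.
  assert (Hsplit : mu P - mu E <= eps / 2 * sum_f_R0 m N + (1 - sum_f_R0 m N)).
  { apply (series_le_split (fun k => m k * (nus k P - nus k E)) m _ 1 _ N); [| exact Hm1 | |].
    - apply (series_ext (fun k => m k * nus k P - m k * nus k E)).
      + intros k. ring.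
      + apply series_minus; apply mu_mixture.
    - intros k. rewrite <- (Rmult_1_r (m k)) at 2. apply Rmult_le_compat_l; [apply m_nonneg|].
      pose proof (prob_le1 _ P (nus_prob k)). pose proof (proj1 (nus_prob k) E). lra.
    - intros k Hk. rewrite (Rmult_comm (eps / 2)). apply Rmult_le_compat_l; [apply m_nonneg|].
      specialize (Hl k Hk). lra. }
  pose proof (cond_pos_sum m N m_nonneg).
  pose proof (partial_sum_le_series m m_nonneg 1 N Hm1).
  assert (eps / 2 * sum_f_R0 m N <= eps / 2).
  { rewrite <- (Rmult_1_r (eps / 2)) at 2. apply Rmult_le_compat_l; lra. }
  lra.
Qed.
End Mixture.

Lemma rigid_mixture_cournot {Sg} (chi : nat -> sentence Sg) P mu :
  (forall phi, has_sep_model phi -> exists i, chi i = phi) ->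
  rigid_mixture chi P mu -> cournot mu.
Proof.
  intros Honto (m & nus & Hm & _ & Hprob & _ & Hchi & Hmix) phi Hphi.
  destruct (Honto phi Hphi) as [i <-].
  apply Rlt_le_trans with (m i * nus i (chi i)).
  - rewrite Hchi, Rmult_1_r. apply Hm.
  - apply mixture_ge_component; auto. intros k. apply Rlt_le, Hm.
Qed.

Lemma rigid_mixture_gaifman {Sg} (chi : nat -> sentence Sg) mu :
  is_prob mu -> rigid_mixture chi gaifman mu -> gaifman mu.
Proof.
  intros Hmu (m & nus & Hm & Hm1 & Hprob & Hg & _ & Hmix).
  apply (mixture_gaifman m nus); auto.
  - intros k. apply Rlt_le, Hm.
  - apply prob_measure, Hmu.
Qed.

Section CournotDecomposition.
Variables (Sg : Sig) (chi : nat -> sentence Sg) (mu : sentence Sg -> R).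
Hypothesis mu_prob : is_prob mu.
Hypothesis mu_cournot : cournot mu.
Hypothesis chi_sep : forall i, has_sep_model (chi i).
Variable j : nat.
Hypothesis chi_j : chi j = tTrue.

Let mu_measure : is_measure mu := prob_measure mu mu_prob.

Definition weight (k : nat) : R := (1/2) ^ S k.

Definition piece (k : nat) (p : sentence Sg) : R := weight k * mu (tAnd p (chi k)).

Lemma weight_pos k : 0 < weight k.
Proof. apply pow_lt. lra. Qed.

Lemma piece_measure k : is_measure (piece k).
Proof. apply measure_restrict; [exact mu_measure | apply Rlt_le, weight_pos]. Qed.

Lemma piece_partial_sum_le p n : sum_f_R0 (fun k => piece k p) n <= mu p.
Proof.
  apply Rle_trans with (sum_f_R0 (fun k => weight k * mu p) n).
  - apply sum_Rle. intros k _. apply Rmult_le_compat_l; [apply Rlt_le, weight_pos|].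
    apply (measure_mono _ _ _ mu_measure). intros I. rewrite truth_and.
    apply andb_prop.
  - rewrite <- scal_sum. pose proof (measure_nonneg _ mu_measure p).
    pose proof (half_pow_partial_sum_le1 n).
    rewrite <- (Rmult_1_r (mu p)) at 2. apply Rmult_le_compat_l; assumption.
Qed.

Definition pieces_total (p : sentence Sg) : R :=
  proj1_sig (bounded_series_cv (fun k => piece k p)
               (fun k => measure_nonneg _ (piece_measure k) p) (mu p) (piece_partial_sum_le p)).

Lemma pieces_total_sum p : infinite_sum (fun k => piece k p) (pieces_total p).
Proof. unfold pieces_total. apply proj2_sig. Qed.

Lemma pieces_total_le p : pieces_total p <= mu p.
Proof.
  apply (Un_cv_le_eventually _ _ _ 0 (pieces_total_sum p)). intros n _.
  apply piece_partial_sum_le.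
Qed.

Definition residual (p : sentence Sg) : R := mu p - pieces_total p.

Lemma residual_measure : is_measure residual.
Proof.
  apply measure_minus; [exact mu_measure| |exact pieces_total_le].
  exact (measure_series piece pieces_total piece_measure pieces_total_sum).
Qed.

(* The residual mass not captured by the pieces is given to the component
   indexed by [j], which is harmless since [chi j] is true everywhere. *)
Definition component_mass (i : nat) (p : sentence Sg) : R :=
  piece i p + (if Nat.eq_dec i j then residual p else 0).

Lemma component_mass_measure i : is_measure (component_mass i).
Proof.
  apply measure_plus; [apply piece_measure|].
  destruct (Nat.eq_dec i j); [exact residual_measure | exact measure_zero].
Qed.

Lemma component_mass_le i p : component_mass i p <= mu p.
Proof.
  unfold component_mass, residual.
  assert (piece i p <= pieces_total p).
  { apply (term_le_series (fun k => piece k p)); [|apply pieces_total_sum].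
    intros k. apply (measure_nonneg _ (piece_measure k)). }
  pose proof (pieces_total_le p).
  destruct (Nat.eq_dec i j); lra.
Qed.

Lemma component_mass_true_pos i : 0 < component_mass i tTrue.
Proof.
  assert (Hpiece : 0 < piece i tTrue).
  { apply Rmult_lt_0_compat; [apply weight_pos|].
    rewrite (measure_equiv _ mu_measure _ (chi i)); [apply mu_cournot, chi_sep|].
    intros I. rewrite truth_and, truth_true. reflexivity. }
  pose proof (measure_nonneg _ residual_measure tTrue).
  unfold component_mass. destruct (Nat.eq_dec i j); lra.
Qed.

Lemma component_mass_chi i : component_mass i (chi i) = component_mass i tTrue.
Proof.
  destruct (Nat.eq_dec i j) as [->|Hij]; [rewrite chi_j; reflexivity|].
  unfold component_mass, piece. destruct (Nat.eq_dec i j); [contradiction|].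
  do 2 f_equal. apply (measure_equiv _ mu_measure). intros I.
  rewrite !truth_and, truth_true. destruct (truth I (chi i)); reflexivity.
Qed.

Lemma component_mass_sum p : infinite_sum (fun i => component_mass i p) (mu p).
Proof.
  replace (mu p) with (pieces_total p + residual p) by (unfold residual; ring).
  apply series_plus; [apply pieces_total_sum | apply series_single].
Qed.

Definition component (i : nat) (p : sentence Sg) : R :=
  component_mass i p / component_mass i tTrue.

Lemma component_prob i : is_prob (component i).
Proof.
  apply normalized_prob; [apply component_mass_measure | apply component_mass_true_pos].
Qed.

Lemma component_chi i : component i (chi i) = 1.
Proof.
  unfold component. rewrite component_mass_chi.
  pose proof (component_mass_true_pos i). field. lra.
Qed.

Lemma mixture_components p :
  infinite_sum (fun i => component_mass i tTrue * component i p) (mu p).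
Proof.
  apply (series_ext (fun i => component_mass i p)); [|apply component_mass_sum].
  intros i. unfold component. pose proof (component_mass_true_pos i). field. lra.
Qed.

Lemma component_weights_sum : infinite_sum (fun i => component_mass i tTrue) 1.
Proof. rewrite <- (prob_true mu mu_prob). apply component_mass_sum. Qed.

Lemma component_gaifman i : gaifman mu -> gaifman (component i).
Proof.
  intros Hg. pose proof (component_mass_true_pos i) as Hpos.
  apply (gaifman_dominated mu _ (/ component_mass i tTrue) mu_measure); auto.
  - apply prob_measure, component_prob.
  - apply Rinv_0_lt_compat, Hpos.
  - intros p. unfold component, Rdiv. rewrite Rmult_comm.
    apply Rmult_le_compat_l; [apply Rlt_le, Rinv_0_lt_compat, Hpos | apply component_mass_le].
Qed.

Lemma cournot_rigid_mixture (P : (sentence Sg -> R) -> Prop) :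
  (forall i, P (component i)) -> rigid_mixture chi P mu.
Proof.
  intros HP. exists (fun i => component_mass i tTrue), component.
  split; [|split; [|split; [|split; [|split]]]].
  - apply component_mass_true_pos.
  - apply component_weights_sum.
  - apply component_prob.
  - exact HP.
  - apply component_chi.
  - apply mixture_components.
Qed.
End CournotDecomposition.

Theorem mainTheorem3 (S : Sig)
  (Hcountable : exists enc : const S -> nat, forall c d, enc c = enc d -> c = d)
  (chi : nat -> sentence S)
  (Hchi_sep : forall i, has_sep_model (chi i))
  (Hchi_onto : forall phi, has_sep_model phi -> exists i, chi i = phi)
  (Hchi_inj : forall i j, chi i = chi j -> i = j)
  (mu : sentence S -> R) (Hmu : is_prob mu) :
  (cournot mu <-> rigid_mixture chi (fun _ => True) mu) /\
  (cournot mu /\ gaifman mu <-> rigid_mixture chi gaifman mu).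
Proof.
  assert (Htrue : has_sep_model (@tTrue S nil)).
  { destruct (Hchi_sep 0%nat) as [I [HI _]]. exists I. split; [exact HI | apply truth_true]. }
  destruct (Hchi_onto _ Htrue) as [j Hj].
  split; split.
  - intros Hc. apply (cournot_rigid_mixture S chi mu Hmu Hc Hchi_sep j Hj). auto.
  - exact (rigid_mixture_cournot chi _ mu Hchi_onto).
  - intros [Hc Hg]. apply (cournot_rigid_mixture S chi mu Hmu Hc Hchi_sep j Hj).
    intros i. apply (component_gaifman S chi mu Hmu Hc Hchi_sep j i Hg).
  - intros Hmix. split.
    + apply (rigid_mixture_cournot chi gaifman); assumption.
    + apply (rigid_mixture_gaifman chi); assumption.
Qed.
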